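(* Let $g:[0,\infty)\to\mathbb{R}$ be any function and define $\hat H$ on finite sequences of nonnegative reals with positive sum by $\hat H(a_1,\ldots,a_n)=g(a_1)+\cdots+g(a_n)-g(a_1+\cdots+a_n)$. Define $D(a,b)=g(ab)-a\,g(b)-b\,g(a)$ for $a,b\ge 0$. Then $\hat H$ is homogeneous (i.e. $\hat H(ca_1,\ldots,ca_n)=c\,\hat H(a_1,\ldots,a_n)$ for all $c>0$) if and only if for every $a>0$ the function $b\mapsto D(a,b)$ is additive on $[0,\infty)$, i.e. $D(a,b_1+b_2)=D(a,b_1)+D(a,b_2)$ for all $b_1,b_2\ge0$. Moreover, if $\hat H$ is homogeneous and $g(1)=0$, then $g(ab)=a\,g(b)+b\,g(a)$ for all nonnegative rational numbers $a,b$. *)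

From Stdlib Require Import Reals List QArith Qreals.
Import ListNotations.
Open Scope R_scope.

(* g : [0,oo) -> R is modelled as g : R -> R; only values on [0,oo) are used. *)

Definition lsum (l : list R) : R := fold_right Rplus 0 l.

Definition Hhat (g : R -> R) (l : list R) : R :=
  lsum (map g l) - g (lsum l).

Definition admissible (l : list R) : Prop :=
  Forall (fun x => 0 <= x) l /\ 0 < lsum l.

Definition Hhat_homogeneous (g : R -> R) : Prop :=
  forall (l : list R) (c : R), admissible l -> 0 < c ->
    Hhat g (map (fun x => c * x) l) = c * Hhat g l.

Definition Dg (g : R -> R) (a b : R) : R := g (a * b) - a * g b - b * g a.

Definition D_additive (g : R -> R) : Prop :=
  forall a, 0 < a -> forall b1 b2, 0 <= b1 -> 0 <= b2 ->
    Dg g a (b1 + b2) = Dg g a b1 + Dg g a b2.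

From Stdlib Require Import Reals List QArith Qreals Lra Lia.
Import ListNotations.
Open Scope R_scope.

(* Scaling a list by c > 0, the homogeneity defect of Hhat is
   expressed through D = Dg g c:
     Hhat g (c l) - c Hhat g l = sum_i D(c, x_i) - D(c, sum_i x_i)      (1)
   since g(c x) = D(c, x) + c g(x) + x g(c) and the terms x g(c) add up.
   Hence homogeneity says exactly that each D(c, .) commutes with finite
   sums of nonnegative reals.  Two-element lists give additivity of D(c, .)
   (the list [0; 1] handles the degenerate sum b1 + b2 = 0), and conversely
   additivity extends to finite sums by induction.
   For the second claim we use the general fact that a function additive on
   [0,oo) is Q-linear there: f(q) = q f(1) for nonnegative rationals q.
   With g(1) = 0 we get D(a, 1) = 0, so D(a, q) = 0 for a > 0, which is the
   Leibniz rule g(a q) = a g(q) + q g(a); the case a = 0 follows from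
   g(0) = 0, itself a consequence of D(2, 0) = 0. *)

Lemma lsum_nonneg (l : list R) : Forall (fun x => 0 <= x) l -> 0 <= lsum l.
Proof. induction 1; simpl; lra. Qed.

Definition additive_nonneg (f : R -> R) : Prop :=
  forall x y, 0 <= x -> 0 <= y -> f (x + y) = f x + f y.

Section AdditiveNonneg.

Variable f : R -> R.
Hypothesis f_add : additive_nonneg f.

Lemma additive_nonneg_zero : f 0 = 0.
Proof.
  pose proof (f_add 0 0 (Rle_refl 0) (Rle_refl 0)) as E.
  rewrite Rplus_0_r in E; lra.
Qed.

Lemma additive_nonneg_lsum (l : list R) :
  Forall (fun x => 0 <= x) l -> lsum (map f l) = f (lsum l).
Proof.
  induction 1 as [|x l Hx Hl IH]; simpl.
  - now rewrite additive_nonneg_zero.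
  - rewrite IH, f_add; auto using lsum_nonneg.
Qed.

Lemma additive_nonneg_nat (k : nat) (x : R) :
  0 <= x -> f (INR k * x) = INR k * f x.
Proof.
  intros Hx; induction k as [|k IH].
  - simpl; rewrite Rmult_0_l, additive_nonneg_zero; ring.
  - rewrite S_INR, Rmult_plus_distr_r, Rmult_1_l, f_add, IH.
    + ring.
    + apply Rmult_le_pos; [apply pos_INR | exact Hx].
    + exact Hx.
Qed.

Lemma additive_nonneg_rational (q : Q) :
  0 <= Q2R q -> f (Q2R q) = Q2R q * f 1.
Proof.
  destruct q as [n d]; unfold Q2R; simpl; intros Hq.
  set (x := IZR n * / IZR (Z.pos d)) in *.
  assert (Hd : 0 < IZR (Z.pos d)) by (apply IZR_lt; lia).
  assert (Hdx : IZR (Z.pos d) * x = IZR n) by (unfold x; field; lra).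
  assert (Hn : (0 <= n)%Z).
  { apply le_IZR; rewrite <- Hdx; apply Rmult_le_pos; lra. }
  assert (En : IZR n = INR (Z.to_nat n))
    by now rewrite INR_IZR_INZ, Znat.Z2Nat.id.
  assert (Ed : IZR (Z.pos d) = INR (Pos.to_nat d))
    by now rewrite INR_IZR_INZ, Znat.positive_nat_Z.
  (* d f(x) = f(d x) = f(n * 1) = n f(1) *)
  assert (Hscaled : IZR (Z.pos d) * f x = IZR n * f 1).
  { rewrite Ed, <- additive_nonneg_nat, <- Ed, Hdx by exact Hq.
    rewrite En, <- (additive_nonneg_nat _ 1) by lra.
    now rewrite Rmult_1_r. }
  apply (Rmult_eq_reg_l (IZR (Z.pos d))); [|lra].
  rewrite Hscaled, <- Rmult_assoc, Hdx; reflexivity.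
Qed.

End AdditiveNonneg.

Lemma lsum_scale (c : R) (l : list R) :
  lsum (map (fun x => c * x) l) = c * lsum l.
Proof. induction l as [|x l IH]; simpl; [ring | rewrite IH; ring]. Qed.

Lemma Hhat_scale_defect (g : R -> R) (c : R) (l : list R) :
  Hhat g (map (fun x => c * x) l) - c * Hhat g l =
  lsum (map (Dg g c) l) - Dg g c (lsum l).
Proof.
  assert (Hsum : lsum (map g (map (fun x => c * x) l)) =
                 lsum (map (Dg g c) l) + c * lsum (map g l) + lsum l * g c).
  { induction l as [|x l IH]; simpl; unfold Dg in *; [ring | rewrite IH; ring]. }
  unfold Hhat; rewrite Hsum, lsum_scale; unfold Dg; ring.
Qed.

Lemma D_additive_slice (g : R -> R) (a : R) :
  D_additive g -> 0 < a -> additive_nonneg (Dg g a).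
Proof. intros H Ha b1 b2; apply H, Ha. Qed.

Lemma homogeneous_pair (g : R -> R) (c b1 b2 : R) :
  Hhat_homogeneous g -> 0 < c -> 0 <= b1 -> 0 <= b2 -> 0 < b1 + b2 ->
  Dg g c (b1 + b2) = Dg g c b1 + Dg g c b2.
Proof.
  intros H Hc H1 H2 Hs.
  assert (Hadm : admissible [b1; b2]).
  { split; [repeat (constructor; try assumption) | simpl; lra]. }
  pose proof (Hhat_scale_defect g c [b1; b2]) as K.
  rewrite (H _ c Hadm Hc) in K; simpl in K.
  rewrite !Rplus_0_r in K; lra.
Qed.

(* The list [0; 1] shows D(c, 0) = 0, covering the degenerate sums. *)
Lemma homogeneous_Dg_zero (g : R -> R) (c : R) :
  Hhat_homogeneous g -> 0 < c -> Dg g c 0 = 0.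
Proof.
  intros H Hc.
  pose proof (homogeneous_pair g c 0 1 H Hc) as E.
  rewrite Rplus_0_l in E; lra.
Qed.

Lemma homogeneous_D_additive (g : R -> R) :
  Hhat_homogeneous g -> D_additive g.
Proof.
  intros H a Ha b1 b2 H1 H2.
  destruct (Req_dec (b1 + b2) 0) as [Hs | Hs].
  - replace b1 with 0 by lra; replace b2 with 0 by lra.
    rewrite Rplus_0_r, (homogeneous_Dg_zero g a H Ha); ring.
  - apply homogeneous_pair; auto; lra.
Qed.

(* Second half: additive slices make the right-hand side of (1) vanish. *)
Lemma D_additive_homogeneous (g : R -> R) :
  D_additive g -> Hhat_homogeneous g.
Proof.
  intros H l c [Hl _] Hc.
  pose proof (Hhat_scale_defect g c l) as K.
  rewrite (additive_nonneg_lsum _ (D_additive_slice g c H Hc) l Hl) in K.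
  lra.
Qed.

Lemma homogeneous_leibniz_rational (g : R -> R) (a b : Q) :
  Hhat_homogeneous g -> g 1 = 0 -> 0 <= Q2R a -> 0 <= Q2R b ->
  Dg g (Q2R a) (Q2R b) = 0.
Proof.
  intros H g1 Ha Hb.
  destruct (Req_dec (Q2R a) 0) as [Ea | Ea].
  - assert (g0 : g 0 = 0).
    { pose proof (homogeneous_Dg_zero g 2 H ltac:(lra)) as Z.
      unfold Dg in Z; rewrite Rmult_0_r in Z; lra. }
    rewrite Ea; unfold Dg; rewrite Rmult_0_l, g0; ring.
  - assert (Hadd : additive_nonneg (Dg g (Q2R a))).
    { apply D_additive_slice; [apply homogeneous_D_additive, H | lra]. }
    rewrite (additive_nonneg_rational _ Hadd b Hb).
    unfold Dg; rewrite Rmult_1_r, g1; ring.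
Qed.

Theorem mainTheorem3 (g : R -> R) :
  (Hhat_homogeneous g <-> D_additive g) /\
  (Hhat_homogeneous g -> g 1 = 0 ->
     forall a b : Q, 0 <= Q2R a -> 0 <= Q2R b ->
       g (Q2R a * Q2R b) = Q2R a * g (Q2R b) + Q2R b * g (Q2R a)).
Proof.
  split.
  - split; [apply homogeneous_D_additive | apply D_additive_homogeneous].
  - intros H g1 a b Ha Hb.
    pose proof (homogeneous_leibniz_rational g a b H g1 Ha Hb) as E.
    unfold Dg in E; lra.
Qed.
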